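(* Let $(X_i)_{i\in\mathbb{Z}}$ be a stationary standard semicircular sequence with covariance function $\rho$ in a $\ast$-probability space $(\mathcal{A},\phi)$, with $\rho(t)\to0$ as $|t|\to\infty$. Let $U(x)=\sum_{n=1}^{K}c_nU_n(x)$ be a real polynomial (finite Chebyshev expansion, $c_0=0$) with Chebyshev rank $k_\ast$, and let $\rho_U(t)=\phi(U(X_0)U(X_t))$. Then $$\rho_U(t)=\sum_{k=k_\ast}^{K}c_k^2\,\rho(t)^k\quad(t\in\mathbb{Z}),$$ and $$\sum_{n\in\mathbb{Z}}|\rho_U(n)|<\infty\iff\sum_{n\in\mathbb{Z}}|\rho(n)|^{k_\ast}<\infty.$$ *)

From HB Require Import structures.
From mathcomp Require Import all_boot all_order all_algebra.
Set Implicit Arguments. Unset Strict Implicit. Unset Printing Implicit Defensive.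
Import Order.TTheory GRing.Theory Num.Theory.
Local Open Scope ring_scope.

Section Defs.
Variable C : numClosedFieldType.

Definition star_prob_space (A : lalgType C) (star : A -> A) (phi : A -> C) : Prop :=
  [/\ (forall a x y, star (a *: x + y) = Num.conj a *: star x + star y),
      (forall x y, star (x * y) = star y * star x),
      (forall x, star (star x) = x),
      star 1 = 1 &
   [/\ (forall a x y, phi (a *: x + y) = a * phi x + phi y),
       phi 1 = 1,
       (forall x, phi (star x) = Num.conj (phi x)) &
       (forall x, 0 <= phi (star x * x))]].

(* Free Wick formula: sum over non-crossing pair partitions of the positions of s
   of the product over pairs (a<b) of rho (s_b - s_a); computed by the standard
   recursion on the partner j of the first element (with fuel n). *)
Fixpoint wick_rec (n : nat) (rho : int -> C) (s : seq int) : C :=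
  match n with
  | 0%N => (s == [::])%:R
  | n'.+1 =>
    match s with
    | [::] => 1
    | x :: t => \sum_(j < size t | ~~ odd j)
                  rho (nth 0 t j - x) * wick_rec n' rho (take j t)
                    * wick_rec n' rho (drop j.+1 t)
    end
  end.
Definition wick (rho : int -> C) (s : seq int) : C := wick_rec (size s) rho s.

Definition stationary_std_semicircular (A : lalgType C) (star : A -> A)
    (phi : A -> C) (X : int -> A) (rho : int -> C) : Prop :=
  [/\ forall i, star (X i) = X i,
      rho 0 = 1 &
      forall s : seq int, phi (\prod_(i <- s) X i) = wick rho s].

Fixpoint chebU_pair (n : nat) : {poly C} * {poly C} :=
  match n with
  | 0%N => (1, 'X)
  | n'.+1 => let: (a, b) := chebU_pair n' in (b, 'X * b - a)
  end.
Definition chebU (n : nat) : {poly C} := (chebU_pair n).1.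

Definition peval (A : lalgType C) (p : {poly C}) (x : A) : A :=
  \sum_(i < size p) p`_i *: x ^+ i.

Definition vanishes_at_infty (f : int -> C) : Prop :=
  forall eps : C, 0 < eps -> exists N : nat, forall t : int, (N < `|t|)%N -> `|f t| < eps.

Definition abs_summable_Z (f : int -> C) : Prop :=
  exists M : C, forall N : nat,
    \sum_(i < (N.*2).+1) `|f (i%:Z - N%:Z)| <= M.

End Defs.

(* By the free Wick formula, pairing the first factor of X_0^a X_t^b with
   each of the others gives a recursion for the mixed moments.  Tested
   against the Chebyshev polynomials of the second kind, which are
   orthonormal for the semicircle law, it yields
   phi(U_m(X_0) U_n(X_t)) = [m = n] rho(t)^m, hence rho_U = P(rho) with
   P(z) = sum_k c_k^2 z^k.  As rho(t) -> 0, the lowest term of P dominates: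
   for large |t|, |rho_U(t)| lies between two positive multiples of
   |rho(t)|^k*, so both series converge together. *)
From HB Require Import structures.
From mathcomp Require Import all_boot all_order all_algebra.
From mathcomp Require Import zify ring.
Set Implicit Arguments. Unset Strict Implicit. Unset Printing Implicit Defensive.
Import Order.TTheory GRing.Theory Num.Theory.
Local Open Scope ring_scope.

Section Wick.
Variables (C : numClosedFieldType) (rho : int -> C).

Lemma wick_rec_odd n s : odd (size s) -> wick_rec n rho s = 0.
Proof.
elim: n s => [|n IH] [|x t] //= odd_t.
apply: big1 => j even_j; rewrite (IH (drop j.+1 t)) ?mulr0 // size_drop.
rewrite oddB ?ltn_ord // oddS.
by move: even_j odd_t; case: (odd j); case: (odd (size t)).
Qed.

Lemma wick_rec_fuel n m s : (size s <= n)%N -> (size s <= m)%N ->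
  wick_rec n rho s = wick_rec m rho s.
Proof.
elim: n m s => [|n IH] [|m] [|x t] //= le_n le_m.
apply: eq_bigr => j _; have lt_j := ltn_ord j.
rewrite (IH m (take j t)) ?size_take; try by case: ifP; lia.
by rewrite (IH m (drop j.+1 t)) // size_drop; lia.
Qed.

Lemma wick_recE n s : (size s <= n)%N -> wick_rec n rho s = wick rho s.
Proof. by move=> le_n; apply: wick_rec_fuel. Qed.

Lemma wick_odd s : odd (size s) -> wick rho s = 0.
Proof. exact: wick_rec_odd. Qed.

(* Odd partners enclose an odd number of factors, so they contribute 0. *)
Lemma wick_cons x t : wick rho (x :: t) =
  \sum_(j < size t) rho (nth 0 t j - x) * wick rho (take j t) * wick rho (drop j.+1 t).
Proof.
rewrite [RHS](bigID (fun j : 'I_(size t) => ~~ odd j)) /= [X in _ + X]big1 ?addr0.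
  rewrite /wick /=; apply: eq_bigr => j _.
  by rewrite !wick_recE ?size_drop ?leq_subr // size_take; case: ifP => // /ltnW.
move=> j /negPn odd_j.
by rewrite (@wick_odd (take j t)) ?mulr0 ?mul0r // size_take ltn_ord.
Qed.

Definition semicircle_moment k := wick rho (nseq k 0).

Definition moment_conv (h : nat -> C) n :=
  \sum_(l < n) h l * semicircle_moment (n.-1 - l).

Lemma semicircle_moment0 : semicircle_moment 0 = 1.
Proof. by []. Qed.

Lemma wick_nseq x k : wick rho (nseq k x) = semicircle_moment k.
Proof.
elim/ltn_ind: k => -[|k] IH //.
rewrite /semicircle_moment -[nseq k.+1 x]/(x :: nseq k x).
rewrite -[nseq k.+1 0]/(0 :: nseq k 0) !wick_cons !size_nseq.
apply: eq_bigr => j _; have lt_j := ltn_ord j.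
rewrite !nth_nseq lt_j !subrr !take_nseq ?(ltnW lt_j) // !drop_nseq.
by rewrite !IH //; lia.
Qed.

Lemma moment_conv0 h : moment_conv h 0 = 0.
Proof. by rewrite /moment_conv big_ord0. Qed.

Lemma moment_convS h i :
  moment_conv h i.+1 = h 0%N * semicircle_moment i + moment_conv (fun l => h l.+1) i.
Proof.
rewrite /moment_conv big_ord_recl /= subn0; congr (_ + _).
by apply: eq_bigr => l _; rewrite /bump /=; congr (_ * semicircle_moment _); lia.
Qed.

Definition mixed_moment t a b := wick rho (nseq a 0 ++ nseq b t).

Lemma mixed_moment0l t b : mixed_moment t 0 b = semicircle_moment b.
Proof. exact: wick_nseq. Qed.

Lemma mixed_moment0r t a : mixed_moment t a 0 = semicircle_moment a.
Proof. by rewrite /mixed_moment cats0 wick_nseq. Qed.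

Hypothesis rho0 : rho 0 = 1.

(* The first X_0 is paired either with another X_0 (weight rho 0 = 1) or with
   one of the X_t (weight rho t); the factors in between form a constant word. *)
Lemma mixed_momentSl t a b : mixed_moment t a.+1 b =
  moment_conv (mixed_moment t ^~ b) a + rho t * moment_conv (mixed_moment t a) b.
Proof.
rewrite /mixed_moment /= wick_cons size_cat !size_nseq big_split_ord /=.
congr (_ + _).
  rewrite /moment_conv (reindex_inj rev_ord_inj) /=; apply: eq_bigr => j _.
  have lt_j := ltn_ord j; have lt_aj : (a - j.+1 < a)%N by lia.
  rewrite nth_cat size_nseq lt_aj nth_nseq lt_aj subrr rho0 mul1r.
  rewrite take_cat size_nseq lt_aj take_nseq; last by lia.
  rewrite wick_nseq drop_cat size_nseq mulrC.
  case: ifP => lt_a.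
    rewrite drop_nseq; congr (_ * _); last by congr semicircle_moment; lia.
    by congr (wick _ (nseq _ _ ++ _)); lia.
  have -> : ((a - j.+1).+1 - a = 0)%N by lia.
  have -> : (j = 0 :> nat)%N by lia.
  by rewrite drop0 subn1 subn0.
rewrite /moment_conv mulr_sumr; apply: eq_bigr => l _; have lt_l := ltn_ord l.
rewrite nth_cat take_cat drop_cat !size_nseq.
have -> : (a + l < a)%N = false by lia.
have -> : ((a + l).+1 < a)%N = false by lia.
have -> : (a + l - a = l)%N by lia.
rewrite nth_nseq lt_l subr0 take_nseq ?(ltnW lt_l) // drop_nseq wick_nseq.
by rewrite mulrA; congr (_ * _ * semicircle_moment _); lia.
Qed.

Lemma semicircle_momentS a : semicircle_moment a.+1 = moment_conv semicircle_moment a.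
Proof.
rewrite -(mixed_moment0r 0) mixed_momentSl moment_conv0 mulr0 addr0.
by apply: eq_bigr => l _; rewrite mixed_moment0r.
Qed.

End Wick.

Section PolyMoment.
Variable R : comNzRingType.
Implicit Types (p q : {poly R}) (h g : nat -> R).

Definition pmoment p h := \sum_(i < size p) p`_i * h i.

Lemma pmomentE n p h : (size p <= n)%N -> pmoment p h = \sum_(i < n) p`_i * h i.
Proof.
move=> le_n; rewrite /pmoment (big_ord_widen _ (fun i => p`_i * h i) le_n).
rewrite big_mkcond /=; apply: eq_bigr => i _; case: ltnP => // le_i.
by rewrite nth_default ?mul0r.
Qed.

Lemma eq_pmoment p h g : (forall i, h i = g i) -> pmoment p h = pmoment p g.
Proof. by move=> eq_hg; apply: eq_bigr => i _; rewrite eq_hg. Qed.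

Lemma pmoment0 h : pmoment 0 h = 0.
Proof. by rewrite /pmoment size_poly0 big_ord0. Qed.

Lemma pmoment1 h : pmoment 1 h = h 0%N.
Proof. by rewrite /pmoment size_poly1 big_ord1 coef1 mul1r. Qed.

Lemma pmomentD p q h : pmoment (p + q) h = pmoment p h + pmoment q h.
Proof.
pose n := maxn (size p) (size q).
rewrite !(pmomentE (n := n)) ?leq_maxl ?leq_maxr ?size_polyD // -big_split /=.
by apply: eq_bigr => i _; rewrite coefD mulrDl.
Qed.

Lemma pmomentZ a p h : pmoment (a *: p) h = a * pmoment p h.
Proof.
rewrite (pmomentE (n := size p)) ?size_scale_leq // /pmoment mulr_sumr.
by apply: eq_bigr => i _; rewrite coefZ mulrA.
Qed.

Lemma pmomentB p q h : pmoment (p - q) h = pmoment p h - pmoment q h.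
Proof. by rewrite -scaleN1r pmomentD pmomentZ mulN1r. Qed.

Lemma pmoment_sum (I : Type) (r : seq I) (P : pred I) (F : I -> {poly R}) h :
  pmoment (\sum_(i <- r | P i) F i) h = \sum_(i <- r | P i) pmoment (F i) h.
Proof. exact: (big_morph (pmoment^~ h) (fun p q => pmomentD p q h) (pmoment0 h)). Qed.

Lemma pmomentXM p h : pmoment ('X * p) h = pmoment p (fun i => h i.+1).
Proof.
rewrite (pmomentE (n := (size p).+1)); last first.
  by apply: leq_trans (size_polyMleq _ _) _; rewrite size_polyX.
rewrite big_ord_recl coefXM mul0r add0r.
by apply: eq_bigr => i _; rewrite coefXM.
Qed.

Lemma pmomentDh p h g : pmoment p (fun i => h i + g i) = pmoment p h + pmoment p g.
Proof. by rewrite /pmoment -big_split; apply: eq_bigr => i _; rewrite mulrDr. Qed.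

Lemma pmomentMl p a h : pmoment p (fun i => a * h i) = a * pmoment p h.
Proof. by rewrite /pmoment mulr_sumr; apply: eq_bigr => i _; rewrite mulrCA. Qed.

Lemma pmomentMr p h a : pmoment p (fun i => h i * a) = pmoment p h * a.
Proof. by rewrite mulrC -pmomentMl; apply: eq_pmoment => i; rewrite mulrC. Qed.

Lemma pmoment_sumh p (I : Type) (r : seq I) (P : pred I) (F : nat -> I -> R) :
  pmoment p (fun i => \sum_(l <- r | P l) F i l) =
  \sum_(l <- r | P l) pmoment p (fun i => F i l).
Proof. by rewrite /pmoment; under eq_bigr do rewrite mulr_sumr; rewrite exchange_big. Qed.

Lemma pmomentC p q (G : nat -> nat -> R) :
  pmoment p (fun i => pmoment q (G i)) = pmoment q (fun j => pmoment p (G^~ j)).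
Proof.
rewrite /pmoment; under eq_bigr do rewrite mulr_sumr.
rewrite exchange_big; apply: eq_bigr => j _; rewrite mulr_sumr.
by apply: eq_bigr => i _; rewrite mulrCA.
Qed.

End PolyMoment.

Section Chebyshev.
Variable C : numClosedFieldType.
Local Notation U := (chebU C).

Lemma chebU0 : U 0 = 1. Proof. by []. Qed.

Lemma chebU1 : U 1 = 'X. Proof. by []. Qed.

Lemma chebUSS n : U n.+2 = 'X * U n.+1 - U n.
Proof.
have chebU_pair2 m : (chebU_pair C m).2 = U m.+1.
  by rewrite /chebU /=; case: (chebU_pair C m).
by rewrite -chebU_pair2 /chebU /=; case: (chebU_pair C n).
Qed.

Variables (rho : int -> C).
Hypothesis rho0 : rho 0 = 1.
Local Notation mu := (semicircle_moment rho).
Local Notation conv := (moment_conv rho).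

Lemma semicircle_moment1 : mu 1 = 0.
Proof. by rewrite semicircle_momentS // moment_conv0. Qed.

Lemma pmomentXM_conv p h :
  pmoment ('X * p) (conv h) = h 0%N * pmoment p mu + pmoment p (conv (fun l => h l.+1)).
Proof. by rewrite pmomentXM (eq_pmoment _ (moment_convS _ h)) pmomentDh pmomentMl. Qed.

Lemma pmoment_chebUSS_mu n :
  (forall h, pmoment (U n.+1) (conv h) = pmoment (U n) h) -> pmoment (U n.+2) mu = 0.
Proof.
move=> convE; rewrite chebUSS pmomentB pmomentXM.
by rewrite (eq_pmoment _ (semicircle_momentS rho0)) convE subrr.
Qed.

Lemma pmoment_chebU_conv n h : pmoment (U n.+1) (conv h) = pmoment (U n) h.
Proof.
elim/ltn_ind: n h => -[|[|n]] IH h.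
- rewrite chebU1 -[X in pmoment X]mulr1 pmomentXM_conv !pmoment1 moment_conv0.
  by rewrite semicircle_moment0 mulr1 addr0.
- rewrite chebUSS pmomentB pmomentXM_conv chebU1 -[X in pmoment X]mulr1 !pmomentXM.
  rewrite chebU0 !pmoment1 semicircle_moment1 mulr0 add0r moment_convS.
  by rewrite semicircle_moment0 !moment_conv0 mulr1 addr0 subr0.
- rewrite chebUSS pmomentB pmomentXM_conv pmoment_chebUSS_mu; last exact: IH.
  by rewrite mulr0 add0r !IH // chebUSS pmomentB pmomentXM.
Qed.

Lemma pmoment_chebU_mu n : pmoment (U n) mu = (n == 0)%:R.
Proof.
case: n => [|[|n]]; first by rewrite pmoment1.
  by rewrite chebU1 -[X in pmoment X]mulr1 pmomentXM pmoment1 semicircle_moment1.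
by rewrite (pmoment_chebUSS_mu (pmoment_chebU_conv n)).
Qed.

End Chebyshev.

Section MixedChebyshev.
Variables (C : numClosedFieldType) (rho : int -> C) (t : int).
Hypothesis rho0 : rho 0 = 1.
Local Notation U := (chebU C).
Local Notation conv := (moment_conv rho).
Local Notation M := (mixed_moment rho t).

Definition cheb_mixed_moment m b := pmoment (U m) (M ^~ b).

Lemma cheb_mixed_momentS m b :
  cheb_mixed_moment m.+1 b = rho t * conv (cheb_mixed_moment m) b.
Proof.
have XM_mixed p : pmoment ('X * p) (M ^~ b) =
    pmoment p (conv (M ^~ b)) + rho t * conv (fun l => pmoment p (M ^~ l)) b.
  rewrite pmomentXM (eq_pmoment _ (fun i => mixed_momentSl rho0 t i b)).
  rewrite pmomentDh pmomentMl; congr (_ + _ * _).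
  by rewrite pmoment_sumh; apply: eq_bigr => l _; rewrite pmomentMr.
case: m => [|m]; rewrite /cheb_mixed_moment.
  by rewrite chebU1 -[X in pmoment X]mulr1 XM_mixed pmoment1 moment_conv0 add0r.
by rewrite chebUSS pmomentB XM_mixed pmoment_chebU_conv // addrAC subrr add0r.
Qed.

Lemma pmoment_cheb_mixed_moment m n :
  pmoment (U n) (cheb_mixed_moment m) = (m == n)%:R * rho t ^+ m.
Proof.
elim: m n => [|m IH] n.
  rewrite expr0 mulr1 /cheb_mixed_moment (eq_pmoment _ (fun j => pmoment1 _)).
  by rewrite (eq_pmoment _ (mixed_moment0l rho t)) pmoment_chebU_mu // eq_sym.
rewrite (eq_pmoment _ (cheb_mixed_momentS m)) pmomentMl.
case: n => [|n]; first by rewrite chebU0 pmoment1 moment_conv0 mulr0 mul0r.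
by rewrite pmoment_chebU_conv // IH eqSS exprS mulrCA.
Qed.

Lemma pmoment_cheb_expansion (r : seq nat) (c : nat -> C) (P : {poly C}) :
  uniq r -> P = \sum_(n <- r) c n *: U n ->
  pmoment P (fun i => pmoment P (M i)) = \sum_(m <- r) c m ^+ 2 * rho t ^+ m.
Proof.
move=> uniq_r ->; rewrite pmoment_sum big_seq_cond [RHS]big_seq_cond.
apply: eq_bigr => m /andP[r_m _]; rewrite pmomentZ.
under eq_pmoment do rewrite pmoment_sum; rewrite pmoment_sumh.
under eq_bigr => l _.
  under eq_pmoment do rewrite pmomentZ.
  rewrite pmomentMl pmomentC -/(cheb_mixed_moment m) pmoment_cheb_mixed_moment.
over.
rewrite (bigD1_seq m) //= eqxx mul1r big1 ?addr0; first by rewrite mulrA expr2.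
by move=> n ne_nm; rewrite eq_sym (negbTE ne_nm) mul0r mulr0.
Qed.

End MixedChebyshev.

Section StarProbability.
Variables (C : numClosedFieldType) (A : lalgType C) (star : A -> A) (phi : A -> C).
Hypothesis probA : star_prob_space star phi.

Lemma phi_linear a x y : phi (a *: x + y) = a * phi x + phi y.
Proof. by case: probA => _ _ _ _ []. Qed.

Lemma phi0 : phi 0 = 0.
Proof.
have := phi_linear 1 0 0; rewrite scaler0 addr0 mul1r => phi00.
by apply: (addrI (phi 0)); rewrite addr0 -phi00.
Qed.

Lemma phiD x y : phi (x + y) = phi x + phi y.
Proof. by have := phi_linear 1 x y; rewrite scale1r mul1r. Qed.

Lemma phiZ a x : phi (a *: x) = a * phi x.
Proof. by rewrite -[a *: x]addr0 phi_linear phi0 addr0. Qed.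

Lemma phi_sum (I : Type) (r : seq I) (P : pred I) (F : I -> A) :
  phi (\sum_(i <- r | P i) F i) = \sum_(i <- r | P i) phi (F i).
Proof. exact: (big_morph phi phiD phi0). Qed.

Lemma starZ a x : star (a *: x) = Num.conj a *: star x.
Proof.
have star_linear b y z : star (b *: y + z) = Num.conj b *: star y + star z.
  by case: probA.
have star0 : star 0 = 0.
  have := star_linear 1 0 0; rewrite scaler0 addr0 rmorph1 scale1r => star00.
  by apply: (addrI (star 0)); rewrite addr0 -star00.
by rewrite -[a *: x]addr0 star_linear star0 addr0.
Qed.

(* A is only a left algebra: scalars cannot be pulled out of the right factor
   of a product directly, only through the involution. *)
Lemma phi_mulrZ x b y : phi (x * (b *: y)) = b * phi (x * y).
Proof.
case: probA => _ star_mul _ _ [_ _ phi_star _].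
apply: (can_inj (@conjCK C)).
by rewrite -phi_star star_mul starZ -scalerAl phiZ -star_mul phi_star rmorphM.
Qed.

Lemma phi_peval_mul (p q : {poly C}) (x y : A) :
  phi (peval p x * peval q y) = pmoment p (fun i => pmoment q (fun j => phi (x ^+ i * y ^+ j))).
Proof.
rewrite /peval mulr_suml phi_sum; apply: eq_bigr => i _.
rewrite mulr_sumr phi_sum mulr_sumr; apply: eq_bigr => j _.
by rewrite -scalerAl phiZ phi_mulrZ.
Qed.

End StarProbability.

Section SymmetricPartialSums.
Variable R : numDomainType.
Implicit Types g : int -> R.

Definition sym_psum N g := \sum_(i < N.*2.+1) g (i%:Z - N%:Z).

Lemma sym_psumS N g : sym_psum N.+1 g = g (- N.+1%:Z) + sym_psum N g + g N.+1%:Z.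
Proof.
rewrite /sym_psum doubleS big_ord_recl big_ord_recr /= -addrA; congr (g _ + (_ + g _)).
- lia.
- by apply: eq_bigr => i _; congr g; rewrite /bump /=; lia.
- by rewrite /bump /= -addnn; lia.
Qed.

Lemma sym_psum_le_support N N0 g : (forall t, 0 <= g t) ->
  (forall t, (N0 < `|t|)%N -> g t = 0) -> sym_psum N g <= sym_psum N0 g.
Proof.
move=> g_ge0 g_supp; have [le_N|lt_N] := leqP N N0.
  rewrite -(subnKC le_N); elim: (N0 - N)%N => [|k IH]; first by rewrite addn0.
  apply: le_trans IH _; rewrite addnS sym_psumS -addrA addrCA lerDl.
  exact: addr_ge0.
suff -> : sym_psum N g = sym_psum N0 g by [].
rewrite -(subnKC (ltnW lt_N)); elim: (N - N0)%N => [|k IH]; first by rewrite addn0.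
by rewrite addnS sym_psumS IH !g_supp ?addr0 ?add0r //; lia.
Qed.

End SymmetricPartialSums.

Lemma abs_summable_Z_dominated (C : numClosedFieldType) (f g : int -> C) a N0 :
  0 <= a -> (forall t, (N0 < `|t|)%N -> `|f t| <= a * `|g t|) ->
  abs_summable_Z g -> abs_summable_Z f.
Proof.
move=> a_ge0 f_dom [B g_sum].
pose h t := if (`|t| <= N0)%N then `|f t| else 0.
have h_ge0 t : 0 <= h t by rewrite /h; case: ifP.
have h_supp t : (N0 < `|t|)%N -> h t = 0 by rewrite /h; case: leqP.
exists (a * B + sym_psum N0 h) => N.
have f_le t : `|f t| <= a * `|g t| + h t.
  rewrite /h; case: leqP => [_|lt_t]; last by rewrite addr0 f_dom.
  by rewrite lerDr mulr_ge0.
apply: le_trans (ler_sum _ (fun i _ => f_le _)) _.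
rewrite big_split /= -mulr_sumr lerD ?ler_wpM2l ?g_sum //.
exact: sym_psum_le_support.
Qed.

Section PowerSumBounds.
Variable R : numFieldType.
Implicit Types (a : nat -> R) (z : R).

Lemma norm_sum_pow_le a k n z : `|z| <= 1 ->
  `|\sum_(k <= i < n) a i * z ^+ i| <= (\sum_(k <= i < n) `|a i|) * `|z| ^+ k.
Proof.
move=> z_le1; apply: le_trans (ler_norm_sum _ _ _) _.
rewrite mulr_suml big_nat_cond [X in _ <= X]big_nat_cond.
apply: ler_sum => i /andP[/andP[le_ki _] _].
by rewrite normrM normrX ler_wpM2l ?ler_wiXn2l.
Qed.

Lemma norm_sum_pow_ge a k n z : (k < n)%N -> `|z| <= 1 ->
  (\sum_(k.+1 <= i < n) `|a i|) * `|z| <= `|a k| / 2 ->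
  `|a k| / 2 * `|z| ^+ k <= `|\sum_(k <= i < n) a i * z ^+ i|.
Proof.
move=> lt_kn z_le1 tail_small; rewrite big_ltn //.
apply: le_trans (lerB_normD _ _); rewrite normrM normrX.
have tail_le : `|\sum_(k.+1 <= i < n) a i * z ^+ i| <= `|a k| / 2 * `|z| ^+ k.
  apply: le_trans (norm_sum_pow_le _ _ _ z_le1) _.
  by rewrite exprS mulrA; apply: ler_wpM2r; rewrite ?exprn_ge0.
rewrite [in X in _ <= X](splitr `|a k|) mulrDl -addrA lerDl subr_ge0.
exact: tail_le.
Qed.

End PowerSumBounds.

Lemma eventually_norm_sum_pow_ge (C : numClosedFieldType) (a : nat -> C) k n
    (f : int -> C) :
  (k < n)%N -> a k != 0 -> vanishes_at_infty f -> exists N : nat,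
  forall t, (N < `|t|)%N -> `|f t| ^+ k <= 2 / `|a k| * `|\sum_(k <= i < n) a i * f t ^+ i|.
Proof.
move=> lt_kn ak_neq0 f_van.
set S := \sum_(k.+1 <= i < n) `|a i|.
have S_ge0 : 0 <= S by exact: sumr_ge0.
have ak_gt0 : 0 < `|a k| by rewrite normr_gt0.
pose eps := `|a k| / 2 / (S + 1).
have eps_gt0 : 0 < eps by rewrite !divr_gt0 // ltr_wpDl.
have [N1 f_le1] := f_van 1 ltr01.
have [N2 f_small] := f_van eps eps_gt0.
exists (maxn N1 N2) => t; rewrite gtn_max => /andP[/f_le1/ltW f_t_le1 /f_small/ltW f_t_le].
have tail_small : S * `|f t| <= `|a k| / 2.
  apply: le_trans (_ : (S + 1) * `|f t| <= _).
    by rewrite ler_wpM2r ?lerDl.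
  by rewrite mulrC -ler_pdivlMr ?ltr_wpDl.
have := norm_sum_pow_ge lt_kn f_t_le1 tail_small.
rewrite -(@ler_pM2l _ (2 / `|a k|)) ?divr_gt0 //; apply: le_trans.
have normak_neq0 : `|a k| != 0 by rewrite gt_eqF.
suff -> : 2 / `|a k| * (`|a k| / 2 * `|f t| ^+ k) = `|f t| ^+ k by [].
by field.
Qed.

Theorem lemma4p3 (C : numClosedFieldType) (A : lalgType C) (star : A -> A)
    (phi : A -> C) (X : int -> A) (rho : int -> C)
    (K : nat) (c : nat -> C) (kstar : nat) :
  star_prob_space star phi ->
  stationary_std_semicircular star phi X rho ->
  vanishes_at_infty rho ->
  (forall n, c n \is Num.real) ->
  c 0%N = 0 ->
  (1 <= kstar <= K)%N -> c kstar != 0 -> (forall k, (k < kstar)%N -> c k = 0) ->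
  let U := \sum_(1 <= n < K.+1) c n *: chebU C n in
  let rhoU := fun t : int => phi (peval U (X 0) * peval U (X t)) in
  (forall t : int, rhoU t = \sum_(kstar <= k < K.+1) c k ^+ 2 * rho t ^+ k)
  /\ (abs_summable_Z rhoU <-> abs_summable_Z (fun n => `|rho n| ^+ kstar)).
Proof.
move=> probA [_ rho0 phi_wick] rho_van _ _ /andP[kstar_gt0 le_kstarK] ckstar_neq0
  c_lt U rhoU.
have rhoUE t : rhoU t = \sum_(kstar <= k < K.+1) c k ^+ 2 * rho t ^+ k.
  have mixedE i j : phi (X 0 ^+ i * X t ^+ j) = mixed_moment rho t i j.
    by rewrite /mixed_moment -phi_wick big_cat !big_nseq !iter_mulr_1.
  rewrite /rhoU (phi_peval_mul probA).
  under eq_pmoment do under eq_pmoment do rewrite mixedE.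
  rewrite (pmoment_cheb_expansion t rho0 (iota_uniq 1 (K.+1 - 1)) (erefl U)).
  rewrite -[iota 1 _]/(index_iota 1 K.+1) (@big_cat_nat _ _ _ kstar) ?leqW //=.
  rewrite big_nat big1 ?add0r // => k /andP[_ lt_k].
  by rewrite c_lt // expr0n mul0r.
split=> //.
have c2_neq0 : c kstar ^+ 2 != 0 by rewrite expf_neq0.
have [N1 rho_lt1] := rho_van 1 ltr01.
have [N2 rhoU_ge] := eventually_norm_sum_pow_ge (a := fun k => c k ^+ 2)
  (n := K.+1) le_kstarK c2_neq0 rho_van.
split.
  apply: (abs_summable_Z_dominated (a := 2 / `|c kstar ^+ 2|) (N0 := N2)).
    by rewrite divr_ge0.
  by move=> t /rhoU_ge rhoU_ge_t; rewrite rhoUE normrX normr_id.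
apply: (abs_summable_Z_dominated (a := \sum_(kstar <= k < K.+1) `|c k ^+ 2|) (N0 := N1)).
  exact: sumr_ge0.
move=> t /rho_lt1/ltW rho_le1.
by rewrite rhoUE normrX normr_id; apply: norm_sum_pow_le.
Qed.
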